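(* Let $k\ge 2$. For every deterministic algorithm that solves the $k$-ribbon problem on oriented line graphs of every length with identical agents (even when endpoints know they are endpoints), and for every $n$, there is an execution on a line of $n$ agents (some choice of starting agent) in which some agent has not decided its color before round $(2-\frac1k)n-3$.
   Context: Message passing model (1D): line of $n$ agents, synchronous rounds, reliable messages between neighbors, identical agents with a common sense of direction and no knowledge of $n$ or their position; initially only one arbitrary starting agent is awake and other agents wake upon receiving a message. The $k$-ribbon problem: every agent outputs a color in $\{1,\dots,k\}$ with each color class contiguous, colors increasing from left to right, and class sizes differing by at most $1$. *)

From mathcomp Require Import all_boot.
Unset Printing Implicit Defensive.

(* A deterministic distributed algorithm for identical agents on an oriented
   line (common sense of direction: left/right ports are distinguished).
   Every agent runs the same code; the only local input is whether it has a
   left neighbour and whether it has a right neighbour (so endpoints know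
   they are endpoints).
   - [start hl hr]  : initial state of the (unique) initially awake agent;
   - [wake hl hr ml mr] : state of a sleeping agent woken up in a round in
     which it received message [ml] from the left and [mr] from the right
     (at least one of them present);
   - [step s ml mr] : state update of an awake agent;
   - [sendL s], [sendR s] : message (if any) sent to the left/right neighbour
     by an awake agent in state [s] during the next round;
   - [decide s] : [Some c] iff the agent has output colour [c] in state [s]. *)
Record Alg : Type := mkAlg {
  St : Type;
  Msg : Type;
  start : bool -> bool -> St;
  wake : bool -> bool -> option Msg -> option Msg -> St;
  step : St -> option Msg -> option Msg -> St;
  sendL : St -> option Msg;
  sendR : St -> option Msg;
  decide : St -> option nat
}.

(* Configuration after [t] synchronous rounds on a line of [n] agents
   (indices 0..n-1, left to right) where agent [p] is the starting agent.
   [None] = asleep (or out of range). *)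
Fixpoint conf (A : Alg) (n p t : nat) : nat -> option (St A) :=
  match t with
  | 0 => fun i => if (i == p) && (i < n) then Some (start A (0 < i) (i.+1 < n))
                  else None
  | t'.+1 =>
      let c := conf A n p t' in
      fun i =>
        let ml := if 0 < i then obind (sendR A) (c i.-1) else None in
        let mr := if i.+1 < n then obind (sendL A) (c i.+1) else None in
        if i < n then
          match c i with
          | Some s => Some (step A s ml mr)
          | None => if isSome ml || isSome mr
                    then Some (wake A (0 < i) (i.+1 < n) ml mr)
                    else None
          end
        else None
  end.

Definition output (A : Alg) (n p t i : nat) : option nat :=
  obind (decide A) (conf A n p t i).

Definition is_ribbon (k n : nat) (c : nat -> nat) : Prop :=
  (forall i, i < n -> 1 <= c i <= k) /\
  (forall i j l, i <= j -> j <= l -> l < n -> c i = c l -> c j = c i) /\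
  (forall i j, i <= j -> j < n -> c i <= c j) /\
  (forall a b, 1 <= a <= k -> 1 <= b <= k ->
     count (fun i => c i == a) (iota 0 n) <= count (fun i => c i == b) (iota 0 n) + 1).

(* [A] solves the k-ribbon problem: on every line length n >= 1 and for every
   starting agent p, every agent eventually decides, and the colours it
   decides (its first, irrevocable output) form a k-ribbon. *)
Definition solves_ribbon (k : nat) (A : Alg) : Prop :=
  forall n p, 0 < n -> p < n ->
  exists c : nat -> nat, is_ribbon k n c /\
    forall i, i < n -> exists t, output A n p t i = Some (c i) /\
                              forall t', t' < t -> output A n p t' i = None.

From mathcomp Require Import all_boot zify.

Set Implicit Arguments.
Unset Strict Implicit.

(* Start the execution at the left endpoint 0 of a line of n agents and watch
   agent i := n %/ k + 1.  Two facts clash: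
   - Balance: in any k-ribbon on n agents the first colour class has size
     about n/k.  Hence agent i (with k * i > n) cannot have colour 1 on the
     line of length n, whereas on the longer line of length n + 3k (where
     k * (i + 1) < n + 3k) it must have colour 1.
   - Locality: information travels one agent per round, so before round
     2n - i - 2 agent i cannot tell whether the line ends at n - 1 or goes
     on; its state is the same on both lines.
   If agent i had decided by such a round, its (first) decision would be the
   same on both lines, contradicting balance. *)

(* Locality: agent 0 starts and information moves one agent per round, so
   agents to the right of position t are still asleep after t rounds. *)
Lemma conf_asleep_beyond (A : Alg) n t j : t < j -> conf A n 0 t j = None.
Proof.
elim: t j => [|t IH] j ltj /=; first by case: j ltj.
rewrite !IH; try lia.
by case: (0 < j); case: (j.+1 < n); case: (j < n).
Qed.

(* Locality: started at the left end, lines of lengths n <= n' are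
   indistinguishable for agent j up to round t as long as the signal "the
   line ends at n - 1" could not have reached j, i.e. t + j + 2 < 2n. *)
Lemma conf_longer_line (A : Alg) n n' t j : n <= n' -> j < n ->
  t + j + 2 < 2 * n -> conf A n 0 t j = conf A n' 0 t j.
Proof.
move=> le_nn'; elim: t j => [|t IH] j ltjn ltt.
  case: j ltjn ltt => [|j] //= ltjn ltt.
  have [n'_pos n_gt1 n'_gt1] : [/\ 0 < n', 1 < n & 1 < n'] by split; lia.
  by rewrite ltjn n'_pos n_gt1 n'_gt1.
case: (leqP j t.+1) => [lejt|ltjt]; last by rewrite !conf_asleep_beyond.
have [ltj1n ltjn' ltj1n'] : [/\ j.+1 < n, j < n' & j.+1 < n'] by split; lia.
have same_j := IH j ltjn ltac:(lia).
have same_j1 := IH j.+1 ltj1n ltac:(lia).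
rewrite /= ltjn ltj1n ltjn' ltj1n' same_j same_j1.
case: (posnP j) => [->|j_gt0] //=.
by rewrite (IH j.-1) //; lia.
Qed.

Lemma output_longer_line (A : Alg) n n' t j : n <= n' -> j < n ->
  t + j + 2 < 2 * n -> output A n 0 t j = output A n' 0 t j.
Proof. by move=> *; rewrite /output (@conf_longer_line A n n'). Qed.

Definition class_size (n : nat) (c : nat -> nat) (a : nat) : nat :=
  count (fun i => c i == a) (iota 0 n).

Lemma sum_indicator lo hi x : \sum_(lo <= b < hi) (x == b) = (lo <= x < hi).
Proof.
elim: hi => [|hi IH]; first by rewrite big_geq //; case: (lo <= x).
case: (leqP lo hi) => [lelo|ltlo]; last by rewrite big_geq //; lia.
rewrite big_nat_recr //= IH.
by case: (ltngtP x hi) => [?|?|->]; case: (leqP lo x) => ? /=; lia.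
Qed.

Lemma sum_class_sizes k n (c : nat -> nat) :
  (forall i, i < n -> 1 <= c i <= k) ->
  \sum_(1 <= b < k.+1) class_size n c b = n.
Proof.
elim: n => [|n IH] c_range; first by rewrite big1.
under eq_bigr => b _ do rewrite /class_size -addn1 iotaD count_cat /= addn0.
rewrite big_split /= IH => [|i lt_in]; last by apply: c_range; lia.
have /andP [c_ge1 c_lek] := c_range n (ltnSn n).
by rewrite sum_indicator c_ge1 ltnS c_lek addn1.
Qed.

(* Balance: the k class sizes add up to n and differ pairwise by at most one,
   so the first class has size about n / k; upper bound ... *)
Lemma ribbon_class1_upper k n c :
  is_ribbon k n c -> k * class_size n c 1 <= n + k.
Proof.
move=> [c_range [_ [_ balanced]]].
have -> : n + k = \sum_(1 <= b < k.+1) (class_size n c b + 1).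
  by rewrite big_split /= sum_class_sizes // sum_nat_const_nat; lia.
have -> : k * class_size n c 1 = \sum_(1 <= b < k.+1) class_size n c 1.
  by rewrite sum_nat_const_nat; lia.
rewrite big_nat_cond [X in _ <= X]big_nat_cond.
by apply: leq_sum => b /andP [/andP [? ?] _]; apply: balanced; lia.
Qed.

Lemma ribbon_class1_lower k n c :
  is_ribbon k n c -> n <= k * (class_size n c 1).+1.
Proof.
move=> [c_range [_ [_ balanced]]].
have -> : k * (class_size n c 1).+1 = \sum_(1 <= b < k.+1) (class_size n c 1).+1.
  by rewrite sum_nat_const_nat; lia.
rewrite -{1}(sum_class_sizes c_range) big_nat_cond [X in _ <= X]big_nat_cond.
by apply: leq_sum => b /andP [/andP [? ?] _]; rewrite -addn1; apply: balanced; lia.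
Qed.

(* Monotonicity: if agent i has colour 1, so do agents 0..i. *)
Lemma ribbon_class1_prefix k n c i :
  is_ribbon k n c -> i < n -> c i = 1 -> i.+1 <= class_size n c 1.
Proof.
move=> [c_range [_ [c_mono _]]] lt_in ci1.
rewrite /class_size -(subnKC lt_in) iotaD count_cat.
have all_one : all (fun j => c j == 1) (iota 0 i.+1).
  apply/allP => j; rewrite mem_iota => /andP [_ ltji]; apply/eqP.
  by have := c_range j ltac:(lia); have := c_mono j i ltac:(lia) lt_in; lia.
by move: all_one; rewrite all_count size_iota => /eqP ->; lia.
Qed.

(* Monotonicity: if agent i has a colour other than 1, so do agents i..n-1. *)
Lemma ribbon_class1_suffix k n c i :
  is_ribbon k n c -> i < n -> c i <> 1 -> class_size n c 1 <= i.
Proof.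
move=> [c_range [_ [c_mono _]]] lt_in ci1.
rewrite /class_size -(subnKC (ltnW lt_in)) iotaD count_cat.
have none_one : count (fun j => c j == 1) (iota (0 + i) (n - i)) = 0.
  apply/eqP; rewrite -leqn0 leqNgt -has_count; apply/hasP => -[j].
  rewrite mem_iota => /andP [leij ltjn] /eqP cj1.
  by have := c_range i lt_in; have := c_mono i j leij ltac:(lia); lia.
by rewrite none_one addn0 (leq_trans (count_size _ _)) ?size_iota.
Qed.

Lemma ribbon_colour1_near_left k n c i :
  is_ribbon k n c -> i < n -> c i = 1 -> k * i <= n.
Proof.
move=> rib lt_in ci1.
by have := ribbon_class1_prefix rib lt_in ci1; have := ribbon_class1_upper rib; nia.
Qed.

Lemma ribbon_colour1_far_right k n c i :
  is_ribbon k n c -> i < n -> c i <> 1 -> n <= k * i.+1.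
Proof.
move=> rib lt_in ci1.
by have := ribbon_class1_suffix rib lt_in ci1; have := ribbon_class1_lower rib; nia.
Qed.

Lemma first_decisions_agree (f g : nat -> option nat) T t0 t1 x y :
  f t0 = Some x -> (forall s, s < t0 -> f s = None) ->
  g t1 = Some y -> (forall s, s < t1 -> g s = None) ->
  (forall s, s <= T -> f s = g s) -> f T <> None -> x = y.
Proof.
move=> ft0 f_before gt1 g_before f_eq_g fT.
have le_t0T : t0 <= T by case: (leqP t0 T) => // /f_before.
case: (ltngtP t0 t1) => [lt01|lt10|eq01].
- by move: (g_before t0 lt01); rewrite -f_eq_g // ft0.
- by move: (f_before t1 lt10); rewrite f_eq_g ?gt1 // ltnW // (leq_trans lt10).
- by move: ft0; rewrite f_eq_g // eq01 gt1 => -[->].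
Qed.

Theorem theorem7 (k : nat) (A : Alg) :
  2 <= k -> solves_ribbon k A ->
  forall n, 0 < n ->
  exists p, p < n /\ exists i, i < n /\
    forall t, k * t + 3 * k < (2 * k - 1) * n -> output A n p t i = None.
Proof.
move=> le2k solves n n_gt0; exists 0; split => //.
case: (ltnP (3 * k) ((2 * k - 1) * n)) => [large|small]; last first.
  by exists 0; split => // t; lia.
set i := (n %/ k).+1.
have [lt_nki le_ki] : n < k * i /\ k * i <= n + k.
  split; first by rewrite mulnC ltn_ceil //; lia.
  by rewrite mulnS addnC leq_add2r mulnC leq_divM.
have lt_in : i < n by nia.
exists i; split => // t t_small; apply/eqP/negPn/negP => decided.
have [c [rib decides]] := solves n 0 n_gt0 n_gt0.
have [c' [rib' decides']] := solves (n + 3 * k) 0 ltac:(lia) ltac:(lia).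
have [t0 [out0 before0]] := decides i lt_in.
have lt_in' : i < n + 3 * k by lia.
have [t1 [out1 before1]] := decides' i lt_in'.
have ci_ne1 : c i <> 1 by move/(ribbon_colour1_near_left rib lt_in); lia.
have c'i_eq1 : c' i = 1.
  apply/eqP/contraT => /eqP /(ribbon_colour1_far_right rib' lt_in').
  by rewrite mulnS; lia.
apply: ci_ne1; rewrite -c'i_eq1.
apply: (@first_decisions_agree (output A n 0 ^~ i) (output A (n + 3 * k) 0 ^~ i) t
  _ _ _ _ out0 before0 out1 before1 _ (elimN eqP decided)).
(* Before round t the end of the line at n - 1 is invisible to agent i. *)
have far : t + i + 2 < 2 * n by rewrite -(ltn_pmul2l (ltnW le2k)); nia.
by move=> s le_st; apply: output_longer_line; lia.
Qed.
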